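(* Let $K$ be a binomial principal ideal domain. Every finitely generated $2$-nilpotent $K$-group without $K$-torsion is regular.
   Context: $K$-groups are nilpotent groups with exponents in the binomial domain $K$ (P. Hall). $Is(N)=\{x\in G: x^\alpha\in N\text{ for some }0\ne\alpha\in K\}$; $I(G)=Is(G')\cap Z(G)$; an addition is a $K$-subgroup $G_0\le Z(G)$ with $Z(G)=G_0\oplus I(G)$. $G$ is regular if $G=H\times G_0$ for some addition $G_0$ and some $K$-subgroup $H$ with $Is(H')\ge Z(H)$ (equivalently $Is(G'Z(G))=Is(G')Z(G)$). *)

From HB Require Import structures.
From mathcomp Require Import all_boot all_order all_algebra.
Set Implicit Arguments. Unset Strict Implicit. Unset Printing Implicit Defensive.
Import GRing.Theory.
Local Open Scope ring_scope.

Definition is_ideal (K : comNzRingType) (I : K -> Prop) : Prop :=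
  [/\ I 0, (forall x y, I x -> I y -> I (x + y)) &
      (forall r x, I x -> I (r * x))].

Definition is_PID (K : idomainType) : Prop :=
  forall I : K -> Prop, is_ideal I ->
    exists d : K, forall x, I x <-> exists r, x = r * d.

Definition is_binomial (K : idomainType) : Prop :=
  (forall n : nat, (0 < n)%N -> n%:R != 0 :> K) /\
  (forall (a : K) (n : nat),
      exists b : K, n`!%:R * b = \prod_(i < n) (a - i%:R)).

Record grp := Grp {
  gcar :> Type;
  gmul : gcar -> gcar -> gcar;
  ginv : gcar -> gcar;
  gone : gcar;
  gmulA : forall x y z, gmul x (gmul y z) = gmul (gmul x y) z;
  gmul1g : forall x, gmul gone x = x;
  gmulVg : forall x, gmul (ginv x) x = gone
}.

Section Groups.
Variable G : grp.
Local Notation "x * y" := (gmul x y).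
Local Notation "x ^-1" := (ginv x).
Local Notation "1" := (gone G).

Definition gcomm (x y : G) : G := x^-1 * y^-1 * x * y.
Definition gconj (x y : G) : G := y^-1 * x * y.

Definition central (z : G) : Prop := forall g : G, z * g = g * z.

Definition nil2 : Prop := forall x y : G, central (gcomm x y).

End Groups.

(* pw : G -> K -> G is the K-power map x |-> x^alpha.  Hall's axioms:
   (1) x^1 = x, x^a x^b = x^(a+b), (x^a)^b = x^(ab);
   (2) (y^-1 x y)^a = y^-1 x^a y;
   (3) x_1^a ... x_n^a = tau_1(x)^a tau_2(x)^C(a,2) ... tau_c(x)^C(a,c),
       tau_i the Hall-Petresco words.
   For a group of class <= 2 the Hall-Petresco words of index >= 3 are
   trivial and (3) is equivalent to its case n = 2:
       x^a y^a = (xy)^a [x,y]^C(a,2),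
   where C(a,2) is the unique b with 2b = a(a-1). *)
Definition is_nil2_Kgroup (K : idomainType) (G : grp) (pw : G -> K -> G) : Prop :=
  nil2 G /\ (forall x : G, pw x 1 = x) /\
  [/\
      (forall (x : G) a b, gmul (pw x a) (pw x b) = pw x (a + b)),
      (forall (x : G) a b, pw (pw x a) b = pw x (a * b)),
      (forall (x y : G) a, pw (gconj x y) a = gconj (pw x a) y) &
      (forall (x y : G) a c, 2%:R * c = a * (a - 1) ->
          gmul (pw x a) (pw y a) = gmul (pw (gmul x y) a) (pw (gcomm x y) c))].

Section KSub.
Variables (K : idomainType) (G : grp) (pw : G -> K -> G).
Local Notation "x * y" := (gmul x y).
Local Notation "1" := (gone G).

Definition Ksubgroup (H : G -> Prop) : Prop :=
  [/\ H 1, (forall x y, H x -> H y -> H (x * y)),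
      (forall x, H x -> H (ginv x)) & (forall x a, H x -> H (pw x a))].

Definition Kgen (S : G -> Prop) : G -> Prop :=
  fun x => forall H, Ksubgroup H -> (forall s, S s -> H s) -> H x.

Definition Kfin_gen : Prop :=
  exists (n : nat) (f : 'I_n -> G), forall x : G, Kgen (fun y => exists i, y = f i) x.

Definition Ktorsion_free : Prop :=
  forall (x : G) (a : K), a != 0 -> pw x a = 1 -> x = 1.

Definition Is (N : G -> Prop) : G -> Prop :=
  fun x => exists a : K, a != 0 /\ N (pw x a).

Definition Kderived (H : G -> Prop) : G -> Prop :=
  Kgen (fun c => exists x y, [/\ H x, H y & c = gcomm x y]).

Definition Zcenter (H : G -> Prop) : G -> Prop :=
  fun z => H z /\ forall g, H g -> z * g = g * z.

Definition fullG : G -> Prop := fun _ => True.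

Definition IG : G -> Prop :=
  fun x => Is (Kderived fullG) x /\ Zcenter fullG x.

Definition addition (G0 : G -> Prop) : Prop :=
  [/\ Ksubgroup G0,
      (forall x, G0 x -> Zcenter fullG x),
      (forall x, G0 x -> IG x -> x = 1) &
      (forall z, Zcenter fullG z -> exists a b, [/\ G0 a, IG b & z = a * b])].

Definition normal (H : G -> Prop) : Prop :=
  forall x y, H x -> H (gconj x y).

Definition direct_product (H N : G -> Prop) : Prop :=
  [/\ normal H, normal N,
      (forall x, H x -> N x -> x = 1) &
      (forall g, exists h n, [/\ H h, N n & g = h * n])].

Definition regular : Prop :=
  exists H G0 : G -> Prop,
    [/\ Ksubgroup H, addition G0, direct_product H G0 &
        (forall z, Zcenter H z -> H z /\ Is (Kderived H) z)].

End KSub.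

(* Let Q = G / Is(G').  Since G has class two, G' is central, Is(G') is a
   central K-subgroup, and the Hall-Petresco identity makes Q a K-module;
   it is torsion-free (Is(G') is isolated) and finitely generated.  The image
   P = Z(G) Is(G') / Is(G') of the centre is a pure submodule of Q, because
   the centre of a K-torsion-free class-two group is isolated.

   Over a PID, a finitely generated module that is torsion-free modulo a
   submodule L is free modulo L (proved below by induction on the number of
   generators, splitting off a saturated rank-one piece).  Applied twice, this
   gives a basis p of P and a free complement span(m) of P in Q.  Lifting p to
   central elements z_i of G, the addition is G0 = { prod z_i^c_i }, and the
   complement is H, the preimage of span(m).  Then G = H x G0, G0 is an
   addition, and Z(H) <= Z(G) maps into P /\ span(m) = 0, i.e.
   Z(H) <= Is(G') = Is(H'). *)

From HB Require Import structures.
From mathcomp Require Import all_boot all_order all_algebra.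
From mathcomp Require Import boolp.

Set Implicit Arguments. Unset Strict Implicit. Unset Printing Implicit Defensive.
Import GRing.Theory.
Local Open Scope ring_scope.

Section LinearCombinations.
Variables (K : idomainType) (V : lmodType K).

(* The linear combination [sum_i c_i s_i] of a finite family [s]; the
   coefficients are indexed by [nat] so that families can be concatenated. *)
Definition lc (c : nat -> K) (s : seq V) : V := \sum_(i < size s) c i *: s`_i.

Lemma lc_nil c : lc c [::] = 0.
Proof. by rewrite /lc big_ord0. Qed.

Lemma lc_cons c x s : lc c (x :: s) = c 0%N *: x + lc (fun i => c i.+1) s.
Proof. by rewrite /lc /= big_ord_recl. Qed.

Lemma lc1 c x : lc c [:: x] = c 0%N *: x.
Proof. by rewrite lc_cons lc_nil addr0. Qed.

Lemma lc_cat c s1 s2 :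
  lc c (s1 ++ s2) = lc c s1 + lc (fun i => c (size s1 + i)%N) s2.
Proof.
rewrite /lc size_cat big_split_ord /=; congr (_ + _).
  by apply: eq_bigr => i _; rewrite nth_cat ltn_ord.
by apply: eq_bigr => i _; rewrite nth_cat ltnNge leq_addr /= addKn.
Qed.

Lemma lc_eq c d s : (forall i, (i < size s)%N -> c i = d i) -> lc c s = lc d s.
Proof. by move=> cd; apply: eq_bigr => i _; rewrite cd. Qed.

Lemma lc0 c s : (forall i, (i < size s)%N -> c i = 0) -> lc c s = 0.
Proof. by move=> c0; rewrite /lc big1 // => i _; rewrite c0 // scale0r. Qed.

Lemma lcD c d s : lc (fun i => c i + d i) s = lc c s + lc d s.
Proof. by rewrite /lc -big_split; apply: eq_bigr => i _; rewrite scalerDl. Qed.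

Lemma lcZ a c s : lc (fun i => a * c i) s = a *: lc c s.
Proof. by rewrite /lc scaler_sumr; apply: eq_bigr => i _; rewrite scalerA. Qed.

Lemma lcN c s : lc (fun i => - c i) s = - lc c s.
Proof. by rewrite -scaleN1r -lcZ; apply: lc_eq => i _; rewrite mulN1r. Qed.

Lemma lc_sum n (d : nat -> K) (F : nat -> nat -> K) b :
  \sum_(j < n) d j *: lc (F j) b = lc (fun i => \sum_(j < n) d j * F j i) b.
Proof.
rewrite /lc; under eq_bigr do rewrite scaler_sumr.
rewrite exchange_big /=; apply: eq_bigr => i _.
by rewrite scaler_suml; apply: eq_bigr => j _; rewrite scalerA.
Qed.

Lemma lc_delta s i : (i < size s)%N -> lc (fun j => (j == i)%:R) s = s`_i.
Proof.
elim: s i => [|x s IH] [|i] //= ltis; rewrite lc_cons /=.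
  by rewrite scale1r lc0 ?addr0.
by rewrite scale0r add0r IH.
Qed.

Definition subm (L : V -> Prop) : Prop :=
  [/\ L 0, forall x y, L x -> L y -> L (x + y) & forall a x, L x -> L (a *: x)].

Lemma submN L x : subm L -> L x -> L (- x).
Proof. by case=> _ _ LZ Lx; rewrite -scaleN1r; apply: LZ. Qed.

Lemma submB L x y : subm L -> L x -> L y -> L (x - y).
Proof. by move=> sL Lx Ly; case: (sL) => _ LD _; apply: LD => //; apply: submN. Qed.

Lemma subm0 : subm (fun x => x = 0).
Proof. by split => // [x y -> ->|a x ->]; rewrite ?addr0 ?scaler0. Qed.

Lemma submT : subm (fun _ => True).
Proof. by []. Qed.

Definition allin (S : V -> Prop) (s : seq V) : Prop :=
  forall i, (i < size s)%N -> S s`_i.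

Lemma subm_lc L c s : subm L -> allin L s -> L (lc c s).
Proof.
move=> [L0 LD LZ] Ls; rewrite /lc; elim/big_ind: _ => // i _.
by apply: LZ; apply: Ls.
Qed.

Definition span (s : seq V) (x : V) : Prop := exists c, x = lc c s.

Lemma subm_span s : subm (span s).
Proof.
split.
- by exists (fun _ => 0); rewrite lc0.
- by move=> _ _ [c ->] [d ->]; exists (fun i => c i + d i); rewrite lcD.
- by move=> a _ [c ->]; exists (fun i => a * c i); rewrite lcZ.
Qed.

Definition spans (L S : V -> Prop) (s : seq V) : Prop :=
  allin S s /\ forall x, S x -> exists c, L (x - lc c s).

Definition indep (L : V -> Prop) (s : seq V) : Prop :=
  forall c, L (lc c s) -> forall i, (i < size s)%N -> c i = 0.

Definition tfree (L S : V -> Prop) : Prop :=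
  forall a x, S x -> a != 0 -> L (a *: x) -> L x.

End LinearCombinations.

Section RelativeFreeness.
Variables (K : idomainType) (V : lmodType K).
Hypothesis hpid : is_PID K.

(* [satur L g0] is the saturation of [L + K g0]: the vectors having a nonzero
   multiple congruent to a multiple of [g0] modulo [L]. *)
Definition satur (L : V -> Prop) (g0 : V) (x : V) : Prop :=
  exists a c, a != 0 /\ L (a *: x - c *: g0).

Lemma satur_sub (L : V -> Prop) g0 x : L x -> satur L g0 x.
Proof.
by move=> Lx; exists 1, 0; rewrite oner_neq0 scale1r scale0r subr0.
Qed.

Lemma subm_satur (L : V -> Prop) g0 : subm L -> subm (satur L g0).
Proof.
move=> [L0 LD LZ]; split.
- exact: satur_sub.
- move=> x y [a [c [a0 Lx]]] [a' [c' [a'0 Ly]]].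
  exists (a * a'), (a' * c + a * c'); split; first by rewrite mulf_neq0.
  have -> : (a * a') *: (x + y) - (a' * c + a * c') *: g0 =
      a' *: (a *: x - c *: g0) + a *: (a' *: y - c' *: g0).
    by rewrite !scalerBr !scalerA scalerDr scalerDl opprD addrACA [a' * a]mulrC.
  by apply: LD; apply: LZ.
- move=> r x [a [c [a0 Lx]]]; exists a, (r * c); split => //.
  by rewrite scalerA mulrC -scalerA -scalerA -scalerBr; apply: LZ.
Qed.

Lemma tfree_satur (L S : V -> Prop) g0 : tfree (satur L g0) S.
Proof.
move=> a x _ a0 [b [c [b0 Lx]]]; exists (b * a), c.
by rewrite mulf_neq0 // -scalerA.
Qed.

Lemma satur_common (L : V -> Prop) g0 t : subm L -> allin (satur L g0) t ->
  exists a, a != 0 /\ forall d, exists k, L (a *: lc d t - k *: g0).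
Proof.
move=> [L0 LD LZ]; elim: t => [|x t IH] Lt.
  by exists 1; rewrite oner_neq0; split => // d; exists 0; rewrite lc_nil scaler0 scale0r subr0.
have [ax [cx [ax0 Lx]]] := Lt 0%N isT.
have [a' [a'0 La']] := IH (fun j => Lt j.+1).
exists (ax * a'); split; first by rewrite mulf_neq0.
move=> d; have [k' Lk'] := La' (fun i => d i.+1).
exists (a' * d 0%N * cx + ax * k').
set y := lc (fun i => d i.+1) t in Lk' *.
have -> : (ax * a') *: lc d (x :: t) - (a' * d 0%N * cx + ax * k') *: g0 =
   (a' * d 0%N) *: (ax *: x - cx *: g0) + ax *: (a' *: y - k' *: g0).
  rewrite lc_cons -/y !scalerBr !scalerA scalerDr scalerDl !scalerA.
  by rewrite opprD addrACA; congr (_ *: _ - _ + (_ - _)); rewrite -mulrA mulrC.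
by apply: LD; apply: LZ.
Qed.

(* Over a PID, the coefficients [k] such that [k g0] is congruent modulo [L]
   to an [a]-multiple of a combination of [t] form a principal ideal; its
   generator [de] is reached by some combination [dd]. *)
Lemma coefficient_ideal (L : V -> Prop) g0 t a : subm L ->
  (forall d, exists k, L (a *: lc d t - k *: g0)) ->
  exists de dd, L (a *: lc dd t - de *: g0) /\
    forall d, exists r, L (a *: lc d t - r *: (de *: g0)).
Proof.
move=> [L0 LD LZ] Ha; pose I k := exists d, L (a *: lc d t - k *: g0).
have idI : is_ideal I.
  split.
  - by exists (fun _ => 0); rewrite lc0 // scaler0 scale0r subr0.
  - move=> x y [d Ld] [d' Ld']; exists (fun i => d i + d' i).
    by rewrite lcD scalerDr scalerDl opprD addrACA; apply: LD.
  - move=> r x [d Ld]; exists (fun i => r * d i).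
    by rewrite lcZ scalerA mulrC -scalerA -scalerA -scalerBr; apply: LZ.
have [de Ide] := hpid idI.
have [dd Ldd] : I de by apply/Ide; exists 1; rewrite mul1r.
exists de, dd; split => // d; have [k Lk] := Ha d.
have [r kE] := proj1 (Ide k) (ex_intro _ d Lk).
by exists r; rewrite scalerA -kE.
Qed.

(* Rank one case: combinations of vectors of [S] commensurable with [g0]
   modulo [L] are, modulo [L], multiples of a single vector [y] (or of none,
   when [de g0] already lies in [L]). *)
Lemma rank_one_basis (L S : V -> Prop) g0 t : subm L -> subm S -> S g0 ->
  allin S t -> tfree L S -> allin (satur L g0) t ->
  exists q, [/\ allin S q, allin (satur L g0) q, indep L q &
                forall d, exists c, L (lc d t - lc c q)].
Proof.
move=> sL sS Sg0 St tfL Lt; have [L0 LD LZ] := sL; have [_ _ SZ] := sS.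
have [a [a0 Ha]] := satur_common sL Lt.
have [de [dd [Ldd Lde]]] := coefficient_ideal sL Ha.
have St_lc d : S (lc d t) by apply: subm_lc.
case: (pselect (L (de *: g0))) => Ldeg0.
  exists [::]; split => // d; exists (fun _ => 0); rewrite lc_nil subr0.
  have [r Lr] := Lde d; apply: (tfL a) => //.
  by rewrite -[a *: _](subrK (r *: (de *: g0))); apply: LD => //; apply: LZ.
set y := lc dd t in Ldd.
exists [:: y]; split.
- by case=> // _; apply: St_lc.
- by case=> // _; exists a, de.
- move=> c; rewrite lc1 => Lcy; case=> // _; apply/eqP/contraT => c0.
  exfalso; apply: Ldeg0; apply: (tfL (c 0%N)) => //; first exact: SZ.
  have -> : c 0%N *: (de *: g0) = a *: (c 0%N *: y) - c 0%N *: (a *: y - de *: g0).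
    by rewrite scalerBr opprB !scalerA mulrC addrC [c 0%N * a]mulrC addrNK.
  by apply: submB => //; apply: LZ.
- move=> d; have [r Lr] := Lde d; exists (fun _ => r); rewrite lc1.
  apply: (tfL a) => //; first by apply: submB => //; apply: SZ; apply: St_lc.
  have -> : a *: (lc d t - r *: y) =
      (a *: lc d t - r *: (de *: g0)) - r *: (a *: y - de *: g0).
    by rewrite !scalerBr opprB !scalerA [r * a]mulrC addrA subrK.
  by apply: submB => //; apply: LZ.
Qed.

(* If [g] generates [S] modulo [L] and [b] is a basis of [S] modulo a larger
   [L'], then subtracting from each [g_i] its [b]-component yields a family
   generating [S /\ L'] modulo [L]. *)
Lemma spans_meet (L L' S : V -> Prop) g b : subm L' -> subm S ->
  (forall x, L x -> L' x) -> spans L S g -> spans L' S b -> indep L' b ->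
  exists t, [/\ allin S t, allin L' t &
     forall x, S x -> L' x -> exists d, L (x - lc d t)].
Proof.
move=> sL' sS LL' [Sg Hg] [Sb Hb] Ib.
have /choice [E HE] : forall x, exists c : nat -> K, S x -> L' (x - lc c b).
  by move=> x; case: (pselect (S x)) => [/Hb [c Hc]|nSx]; [exists c | exists (fun _ => 0)].
pose f x := x - lc (E x) b.
exists (map f g); split.
- move=> j; rewrite size_map => ltj; rewrite (nth_map 0) //.
  by apply: submB => //; [exact: Sg | exact: subm_lc].
- by move=> j; rewrite size_map => ltj; rewrite (nth_map 0) //; apply/HE/Sg.
move=> x Sx L'x; have [d Ld] := Hg x Sx.
pose F i := \sum_(j < size g) d j * E g`_j i.
have lc_t : lc d (map f g) = lc d g - lc F b.
  rewrite /F -(lc_sum (size g) d (fun j i => E g`_j i) b) [lc d (map _ _)]/lc.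
  rewrite [lc d g]/lc size_map -sumrB; apply: eq_bigr => j _.
  by rewrite (nth_map 0) // /f scalerBr.
have L'F : L' (lc F b).
  have -> : lc F b = (x - lc d (map f g)) - (x - lc d g).
    by rewrite lc_t opprB opprB addrC addrA subrK addrC subrK.
  apply: submB => //; last exact: LL'.
  apply: submB => //; apply: subm_lc => // j; rewrite size_map => ltj.
  by rewrite (nth_map 0) //; apply/HE/Sg.
by exists d; rewrite lc_t (lc0 (Ib _ L'F)) subr0.
Qed.

Lemma concat_basis (L L' S : V -> Prop) q b : subm L -> subm L' -> subm S ->
  (forall x, L x -> L' x) -> allin S q -> allin L' q -> indep L q ->
  (forall x, S x -> L' x -> exists c, L (x - lc c q)) ->
  spans L' S b -> indep L' b -> spans L S (q ++ b) /\ indep L (q ++ b).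
Proof.
move=> sL sL' sS LL' Sq L'q Iq Hq [Sb Hb] Ib; split; first split.
- move=> i; rewrite size_cat nth_cat => lti; case: ltnP => [/Sq //|leqi].
  by apply: Sb; rewrite -(ltn_add2l (size q)) subnKC.
- move=> x Sx; have [e Le] := Hb x Sx.
  have [c Lc] := Hq (x - lc e b) (submB sS Sx (subm_lc _ sS Sb)) Le.
  exists (fun i => if (i < size q)%N then c i else e (i - size q)%N).
  rewrite lc_cat (lc_eq (d := c) (s := q)); last by move=> i ->.
  rewrite (lc_eq (d := e) (s := b)); last by move=> i _; rewrite ltnNge leq_addr /= addKn.
  by rewrite opprD addrA addrAC.
move=> h Lh i; rewrite lc_cat in Lh; set h' := fun i => h (size q + i)%N in Lh.
have L'h' : L' (lc h' b).
  rewrite -(addKr (lc h q) (lc h' b)) addrC.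
  by apply: submB => //; [exact: LL' | exact: subm_lc].
have h'0 := Ib _ L'h'; rewrite (lc0 h'0) addr0 in Lh.
rewrite size_cat; case: (ltnP i (size q)) => [ltiq _|leqi lti]; first exact: Iq.
by rewrite -(subnKC leqi); apply: h'0; rewrite -(ltn_add2l (size q)) subnKC.
Qed.

(* Induction on the number of
   generators: [g0 :: g'] is split along the saturation [L'] of [L + K g0],
   where the problem has rank at most one. *)
Theorem relative_free (L S : V -> Prop) g : subm L -> subm S -> spans L S g ->
  tfree L S -> exists b, spans L S b /\ indep L b.
Proof.
elim: g L S => [|g0 g' IH] L S sL sS spans_g tfL.
  by exists [::]; split => // c _ i; rewrite ltn0.
case: spans_g => Sg Hg.
pose L' := satur L g0; have sL' : subm L' := subm_satur g0 sL.
have LL' x : L x -> L' x := @satur_sub L g0 x.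
have spans_g' : spans L' S g'.
  split => [i|x Sx]; first exact: (Sg i.+1).
  have [c Lc] := Hg x Sx; exists (fun i => c i.+1), 1, (c 0%N).
  by rewrite oner_neq0 scale1r; rewrite lc_cons opprD addrA addrAC in Lc.
have [b [spans_b Ib]] := IH L' S sL' sS spans_g' (@tfree_satur L S g0).
have [t [St L't Ht]] := spans_meet sL' sS LL' (conj Sg Hg) spans_b Ib.
have [q [Sq L'q Iq Hq]] := rank_one_basis sL sS (Sg 0%N isT) St tfL L't.
exists (q ++ b); apply: (concat_basis sL sL' sS LL' Sq L'q Iq _ spans_b Ib).
move=> x Sx L'x; have [d Ld] := Ht x Sx L'x; have [c Lc] := Hq d; exists c.
by rewrite -(subrK (lc d t) x) -addrA; case: sL => _ LD _; apply: LD.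
Qed.

Lemma pure_complement (s : seq V) (P : V -> Prop) :
  (forall x, span s x) -> (forall (a : K) (x : V), a != 0 -> a *: x = 0 -> x = 0) ->
  subm P -> (forall (a : K) x, a != 0 -> P (a *: x) -> P x) ->
  exists p m, [/\ allin P p, forall x, exists c d, x = lc c p + lc d m,
    (forall c d, lc c p + lc d m = 0 -> forall i, (i < size p)%N -> c i = 0) &
    (forall d, P (lc d m) -> forall i, (i < size m)%N -> d i = 0)].
Proof.
move=> gen_s tfV sP pureP.
have spans_s L : L 0 -> spans L (fun _ => True) s.
  by move=> L0; split => // x _; have [c ->] := gen_s x; exists c; rewrite subrr.
have P0x x : x = 0 -> P x by move->; case: sP.
have [m [spans_m Im]] := relative_free sP (@submT _ _) (spans_s P (P0x 0 erefl))
  (fun a x _ => pureP a x).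
have [t [_ Pt Ht]] := spans_meet sP (@submT _ _) P0x (spans_s _ erefl) spans_m Im.
have [p [[Pp Hp] Ip]] := relative_free (@subm0 _ _) sP (conj Pt (fun x => Ht x I))
  (fun a x _ a0 => tfV a x a0).
have [[_ Hpm] Ipm] := concat_basis (@subm0 _ _) sP (@submT _ _) P0x (fun i _ => I)
  Pp Ip (fun x _ => Hp x) spans_m Im.
exists p, m; split => // [x|c d cd0 i ltip].
  have [h /eqP] := Hpm x I; rewrite subr_eq0 lc_cat => /eqP ->.
  by exists h, (fun i => h (size p + i)%N).
pose h i := if (i < size p)%N then c i else d (i - size p)%N.
have /Ipm /(_ i) : lc h (p ++ m) = 0.
  rewrite lc_cat (lc_eq (d := c) (s := p)); last by move=> j; rewrite /h => ->.
  rewrite (lc_eq (d := d) (s := m)) // => j _.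
  by rewrite /h ltnNge leq_addr /= addKn.
by rewrite size_cat /h ltip => ->//; apply: ltn_addr.
Qed.

End RelativeFreeness.

Section GroupCalculus.
Variable G : grp.
Local Infix "**" := (@gmul G) (at level 40, left associativity).
Local Notation "1" := (gone G).
Local Notation inv := (@ginv G).

Lemma mulgV (x : G) : x ** inv x = 1.
Proof.
rewrite -{1}(gmul1g (x ** inv x)) -(gmulVg (inv x)).
by rewrite -gmulA [inv x ** (x ** inv x)]gmulA gmulVg gmul1g.
Qed.

Lemma mulg1 (x : G) : x ** 1 = x.
Proof. by rewrite -(gmulVg x) gmulA mulgV gmul1g. Qed.

Lemma mulKg (x y : G) : inv x ** (x ** y) = y.
Proof. by rewrite gmulA gmulVg gmul1g. Qed.

Lemma mulKVg (x y : G) : x ** (inv x ** y) = y.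
Proof. by rewrite gmulA mulgV gmul1g. Qed.

Lemma mulgK (x y : G) : x ** y ** inv y = x.
Proof. by rewrite -gmulA mulgV mulg1. Qed.

Lemma mulgKV (x y : G) : x ** inv y ** y = x.
Proof. by rewrite -gmulA gmulVg mulg1. Qed.

Lemma mulgI (x y z : G) : x ** y = x ** z -> y = z.
Proof. by move=> E; rewrite -(mulKg x y) E mulKg. Qed.

Lemma mulIg (x y z : G) : y ** x = z ** x -> y = z.
Proof. by move=> E; rewrite -(mulgK y x) E mulgK. Qed.

Lemma invgK (x : G) : inv (inv x) = x.
Proof. by apply: (@mulIg (inv x)); rewrite gmulVg mulgV. Qed.

Lemma invMg (x y : G) : inv (x ** y) = inv y ** inv x.
Proof.
apply: (@mulgI (x ** y)); rewrite mulgV.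
by rewrite -gmulA [y ** _]gmulA mulgV gmul1g mulgV.
Qed.

Lemma invg1 : inv 1 = 1.
Proof. by rewrite -{2}(gmulVg 1) mulg1. Qed.

Lemma inv_uniq (x y : G) : x ** y = 1 -> y = inv x.
Proof. by move=> E; apply: (@mulgI x); rewrite E mulgV. Qed.

Lemma gcommE (x y : G) : gcomm x y = inv (y ** x) ** (x ** y).
Proof. by rewrite /gcomm invMg !gmulA. Qed.

Lemma gcomm1 (x y : G) : gcomm x y = 1 -> x ** y = y ** x.
Proof. by rewrite gcommE => E; rewrite -(mulKVg (y ** x) (x ** y)) E mulg1. Qed.

Lemma commute_gcomm (x y : G) : x ** y = y ** x -> gcomm x y = 1.
Proof. by rewrite gcommE => ->; rewrite gmulVg. Qed.

Lemma gconjE (x y : G) : gconj x y = x ** gcomm x y.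
Proof. by rewrite /gconj /gcomm !gmulA mulgV gmul1g. Qed.

Lemma gconj_fixed (x y : G) : gconj x y = x -> x ** y = y ** x.
Proof. by rewrite /gconj => E; rewrite -{2}E -!gmulA mulKVg. Qed.

Lemma gconj_commute (x y : G) : x ** y = y ** x -> gconj x y = x.
Proof. by rewrite /gconj -gmulA => ->; rewrite mulKg. Qed.

End GroupCalculus.

Section KSubgroups.
Variables (K : idomainType) (G : grp) (pw : G -> K -> G).

Lemma Ksubgroup_Kgen S : Ksubgroup pw (Kgen pw S).
Proof.
split.
- by move=> H [].
- move=> x y Hx Hy H sH HS; have [_ HM _ _] := sH.
  by apply: HM; [apply: Hx | apply: Hy].
- by move=> x Hx H sH HS; have [_ _ HV _] := sH; apply: HV; apply: Hx.
- by move=> x a Hx H sH HS; have [_ _ _ HP] := sH; apply: HP; apply: Hx.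
Qed.

Lemma Kgen_in (S : G -> Prop) s : S s -> Kgen pw S s.
Proof. by move=> Ss H _; apply. Qed.

Lemma Kgen_min (S H : G -> Prop) : Ksubgroup pw H -> (forall s, S s -> H s) ->
  forall x, Kgen pw S x -> H x.
Proof. by move=> sH SH x; apply. Qed.

End KSubgroups.

(* Is(G'), the isolator of the derived K-subgroup of G, and congruence modulo
   it; G / Is(G') will be the K-module on which the linear algebra is done. *)
Definition IsD (K : idomainType) (G : grp) (pw : G -> K -> G) : G -> Prop :=
  Is pw (Kderived pw (@fullG G)).

Definition congr_IsD (K : idomainType) (G : grp) (pw : G -> K -> G) (x y : G) :=
  IsD pw (gmul (ginv x) y).

Section Nil2KGroups.
Variables (K : idomainType) (G : grp) (pw : G -> K -> G).
Hypotheses (hbin : is_binomial K) (hKG : is_nil2_Kgroup pw).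
Local Infix "**" := (@gmul G) (at level 40, left associativity).
Local Notation "1" := (gone G).
Local Notation inv := (@ginv G).

Lemma pw1 x : pw x 1%R = x.
Proof. by case: hKG => _ []. Qed.

Lemma pwD x a b : pw x a ** pw x b = pw x (a + b).
Proof. by case: hKG => _ [_ []]. Qed.

Lemma pwM x a b : pw (pw x a) b = pw x (a * b).
Proof. by case: hKG => _ [_ []]. Qed.

Lemma pwJ x y a : pw (gconj x y) a = gconj (pw x a) y.
Proof. by case: hKG => _ [_ []]. Qed.

Lemma comm_central (x y : G) : central (gcomm x y).
Proof. by case: hKG. Qed.

(* The class-two Hall-Petresco identity, with C(a, 2) available in K since K
   is binomial. *)
Lemma pw_HallPetresco x y a : exists c,
  pw x a ** pw y a = pw (x ** y) a ** pw (gcomm x y) c.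
Proof.
have [_ /(_ a 2%N) [c Ec]] := hbin.
exists c; case: hKG => _ [_ [_ _ _]]; apply.
by rewrite Ec !big_ord_recl big_ord0 /= mulr1 subr0.
Qed.

Lemma pw0 x : pw x 0 = 1.
Proof. by apply: (@mulgI _ (pw x 0)); rewrite mulg1 pwD addr0. Qed.

Lemma pw1g a : pw 1 a = 1.
Proof. by rewrite -(pw0 1) pwM mul0r. Qed.

Lemma pwN x a : pw x (- a) = inv (pw x a).
Proof. by apply: inv_uniq; rewrite pwD subrr pw0. Qed.

Lemma pwV x a : pw (inv x) a = inv (pw x a).
Proof. by rewrite -{1}[x]pw1 -pwN pwM mulN1r pwN. Qed.

Lemma pwMg_commute x y a : x ** y = y ** x -> pw (x ** y) a = pw x a ** pw y a.
Proof.
move=> cxy; have [c ->] := pw_HallPetresco x y a.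
by rewrite commute_gcomm // pw1g mulg1.
Qed.

(* Since commutators are central, [x |-> [x, g]] is a K-homomorphism. *)
Lemma pw_gcomm x g a : pw (gcomm x g) a = gcomm (pw x a) g.
Proof.
have := pwJ x g a; rewrite !gconjE pwMg_commute; first exact: mulgI.
exact/esym/comm_central.
Qed.

Lemma Ksubgroup_central : Ksubgroup pw (@central G).
Proof.
split.
- by move=> g; rewrite gmul1g mulg1.
- by move=> x y Zx Zy g; rewrite -gmulA Zy gmulA Zx gmulA.
- by move=> x Zx g; apply: (@mulgI _ x); rewrite mulKVg gmulA Zx mulgK.
- by move=> x a Zx g; apply: gconj_fixed; rewrite -pwJ gconj_commute.
Qed.

Lemma Kderived_comm (x y : G) : Kderived pw (@fullG G) (gcomm x y).
Proof. by apply: Kgen_in; exists x, y. Qed.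

Lemma Kderived_central (x : G) : Kderived pw (@fullG G) x -> central x.
Proof.
apply: Kgen_min; first exact: Ksubgroup_central.
by move=> _ [x' [y' [_ _ ->]]]; apply: comm_central.
Qed.

Lemma IsD_derived (x : G) : Kderived pw (@fullG G) x -> IsD pw x.
Proof. by exists 1%R; rewrite pw1 oner_neq0. Qed.

Hypothesis htf : Ktorsion_free pw.

Lemma central_pw_pure x a : a != 0 -> central (pw x a) -> central x.
Proof.
move=> a0 Zxa g; apply: gcomm1; apply: (htf a0).
by rewrite pw_gcomm; apply: commute_gcomm.
Qed.

Lemma IsD_central (x : G) : IsD pw x -> central x.
Proof. by move=> [a [a0 Dxa]]; apply: (central_pw_pure a0); apply: Kderived_central. Qed.

(* Is(G') is a K-subgroup: its elements are central, so powers of their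
   products are products of their powers. *)
Lemma Ksubgroup_IsD : Ksubgroup pw (IsD pw).
Proof.
have [D1 DM DV DP] := Ksubgroup_Kgen pw
  (fun c => exists x y, [/\ @fullG G x, @fullG G y & c = gcomm x y]).
split.
- exact: IsD_derived.
- move=> x y Ix Iy; have Zx := IsD_central Ix.
  case: Ix Iy => [a [a0 Dxa]] [b [b0 Dyb]]; exists (a * b).
  rewrite mulf_neq0 // pwMg_commute // -pwM [a * b]mulrC -pwM.
  by split => //; apply: DM; apply: DP.
- by move=> x [a [a0 Dxa]]; exists a; rewrite pwV; split => //; apply: DV.
- move=> x b [a [a0 Dxa]]; exists a; split => //.
  by rewrite pwM mulrC -pwM; apply: DP.
Qed.

End Nil2KGroups.

(* The hypotheses of the theorem on a K-group, bundled so that the quotient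
   module constructed below can carry them in its type. *)
Definition tf_nil2_Kgroup (K : idomainType) (G : grp) (pw : G -> K -> G) : Prop :=
  [/\ is_binomial K, is_nil2_Kgroup pw & Ktorsion_free pw].

Definition IsD_quotient (K : idomainType) (G : grp) (pw : G -> K -> G)
  (h : tf_nil2_Kgroup pw) : Type :=
  {C : G -> Prop | exists x : G, C = congr_IsD pw x}.

Section IsDQuotient.
Variables (K : idomainType) (G : grp) (pw : G -> K -> G).
Variable h : tf_nil2_Kgroup pw.
Let hbin : is_binomial K := let: And3 hb _ _ := h in hb.
Let hKG : is_nil2_Kgroup pw := let: And3 _ hk _ := h in hk.
Let htf : Ktorsion_free pw := let: And3 _ _ ht := h in ht.
Local Infix "**" := (@gmul G) (at level 40, left associativity).
Local Notation "1" := (gone G).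
Local Notation inv := (@ginv G).
Local Notation eqv := (congr_IsD pw).
Let sIsD := Ksubgroup_IsD hbin hKG htf.
Let IsD_Z := IsD_central hbin hKG htf.

Lemma IsD1 : IsD pw 1.
Proof. by case: sIsD. Qed.

Lemma IsDM x y : IsD pw x -> IsD pw y -> IsD pw (x ** y).
Proof. by case: sIsD => _ IM _ _; apply: IM. Qed.

Lemma IsDV x : IsD pw x -> IsD pw (inv x).
Proof. by case: sIsD => _ _ IV _; apply: IV. Qed.

Lemma IsDP x a : IsD pw x -> IsD pw (pw x a).
Proof. by case: sIsD => _ _ _ IP; apply: IP. Qed.

Lemma IsD_comm (x y : G) : IsD pw (gcomm x y).
Proof. by apply: IsD_derived; [exact: hKG | exact: Kderived_comm]. Qed.

Lemma eqv_refl x : eqv x x.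
Proof. by rewrite /congr_IsD gmulVg; apply: IsD1. Qed.

Lemma eqv_sym x y : eqv x y -> eqv y x.
Proof. by move=> /IsDV; rewrite invMg invgK. Qed.

Lemma eqv_trans x y z : eqv x y -> eqv y z -> eqv x z.
Proof. by move=> Exy /(IsDM Exy); rewrite gmulA mulgK. Qed.

Lemma eqvP x x' : eqv x x' -> exists2 u, IsD pw u & x' = x ** u.
Proof. by exists (inv x ** x'); rewrite ?mulKVg. Qed.

Lemma eqv_mul x x' y y' : eqv x x' -> eqv y y' -> eqv (x ** y) (x' ** y').
Proof.
move=> /eqvP [u Iu ->] Ey; have Zu := IsD_Z Iu; rewrite /congr_IsD.
have -> : inv (x ** y) ** (x ** u ** y') = u ** (inv y ** y').
  by rewrite invMg -!gmulA mulKg gmulA -Zu -gmulA.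
exact: IsDM.
Qed.

Lemma eqv_inv x x' : eqv x x' -> eqv (inv x) (inv x').
Proof.
move=> /eqvP [u Iu ->]; have [_ _ ZV _] := Ksubgroup_central hKG.
have Zu := ZV _ (IsD_Z Iu).
by rewrite /congr_IsD invgK invMg gmulA -Zu mulgK; apply: IsDV.
Qed.

Lemma eqv_pw x x' a : eqv x x' -> eqv (pw x a) (pw x' a).
Proof.
move=> /eqvP [u Iu ->]; rewrite /congr_IsD (pwMg_commute hbin hKG) //; last first.
  exact/esym/(IsD_Z Iu).
by rewrite mulKg; apply: IsDP.
Qed.

Lemma eqv_comm x y : eqv (x ** y) (y ** x).
Proof. by rewrite /congr_IsD -gcommE; apply: IsD_comm. Qed.

Local Notation Q := (IsD_quotient h).
HB.instance Definition _ := gen_eqMixin Q.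
HB.instance Definition _ := gen_choiceMixin Q.

Definition mk (x : G) : Q := exist _ (eqv x) (ex_intro _ x erefl).
Definition repr (q : Q) : G := projT1 (cid (proj2_sig q)).

Lemma reprK q : mk (repr q) = q.
Proof.
case: q => C p; rewrite /mk /repr /=; case: (cid p) => x Cx /=.
by apply: eq_exist; rewrite Cx.
Qed.

Lemma mk_eq x y : mk x = mk y <-> eqv x y.
Proof.
split=> [/(congr1 (@proj1_sig _ _)) /= ->|Exy]; first exact: eqv_refl.
apply: eq_exist; apply: funext => z; apply: propext.
by split; apply: eqv_trans => //; apply: eqv_sym.
Qed.

Lemma eqv_repr x : eqv (repr (mk x)) x.
Proof. by apply/mk_eq; rewrite reprK. Qed.

Lemma Q_ind (P : Q -> Prop) : (forall x, P (mk x)) -> forall q, P q.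
Proof. by move=> Pmk q; rewrite -(reprK q). Qed.

Definition addQ (q r : Q) : Q := mk (repr q ** repr r).
Definition oppQ (q : Q) : Q := mk (inv (repr q)).
Definition scaleQ (a : K) (q : Q) : Q := mk (pw (repr q) a).

Lemma addQ_mk x y : addQ (mk x) (mk y) = mk (x ** y).
Proof. by apply/mk_eq; apply: eqv_mul; apply: eqv_repr. Qed.

Lemma oppQ_mk x : oppQ (mk x) = mk (inv x).
Proof. by apply/mk_eq; apply: eqv_inv; apply: eqv_repr. Qed.

Lemma scaleQ_mk a x : scaleQ a (mk x) = mk (pw x a).
Proof. by apply/mk_eq; apply: eqv_pw; apply: eqv_repr. Qed.

Lemma addQA : associative addQ.
Proof. by elim/Q_ind => x; elim/Q_ind => y; elim/Q_ind => z; rewrite !addQ_mk gmulA. Qed.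

Lemma addQC : commutative addQ.
Proof. by elim/Q_ind => x; elim/Q_ind => y; rewrite !addQ_mk; apply/mk_eq/eqv_comm. Qed.

Lemma add0Q : left_id (mk 1) addQ.
Proof. by elim/Q_ind => x; rewrite addQ_mk gmul1g. Qed.

Lemma addNQ : left_inverse (mk 1) oppQ addQ.
Proof. by elim/Q_ind => x; rewrite oppQ_mk addQ_mk gmulVg. Qed.

HB.instance Definition _ := GRing.isZmodule.Build Q addQA addQC add0Q addNQ.

Lemma scaleQA a b q : scaleQ a (scaleQ b q) = scaleQ (a * b) q.
Proof. by elim/Q_ind: q => x; rewrite !scaleQ_mk (pwM hKG) mulrC. Qed.

Lemma scaleQ1 : left_id 1%R scaleQ.
Proof. by elim/Q_ind => x; rewrite scaleQ_mk (pw1 hKG). Qed.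

(* Linearity of [scaleQ] in the vector is the Hall-Petresco identity: the
   correcting commutator power lies in G'. *)
Lemma scaleQDr : right_distributive scaleQ +%R.
Proof.
move=> a; elim/Q_ind => x; elim/Q_ind => y.
rewrite [_ + _]addQ_mk !scaleQ_mk [_ + _]addQ_mk; apply/mk_eq.
have [c ->] := pw_HallPetresco hbin hKG x y a.
by rewrite /congr_IsD mulKg; apply/IsDP/IsD_comm.
Qed.

Lemma scaleQDl q : {morph scaleQ^~ q : a b / a + b}.
Proof. by elim/Q_ind: q => x a b; rewrite !scaleQ_mk [RHS]addQ_mk (pwD hKG). Qed.

HB.instance Definition _ :=
  GRing.Zmodule_isLmodule.Build K Q scaleQA scaleQ1 scaleQDr scaleQDl.

Lemma addQE x y : mk x + mk y = mk (x ** y).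
Proof. exact: addQ_mk. Qed.

Lemma oppQE x : - mk x = mk (inv x).
Proof. exact: oppQ_mk. Qed.

Lemma scaleQE a x : a *: mk x = mk (pw x a).
Proof. exact: scaleQ_mk. Qed.

Lemma mk_eq0 x : mk x = 0 <-> IsD pw x.
Proof.
have E : (0 : Q) = mk 1 by [].
rewrite E; split => [/mk_eq/eqv_sym|Ix]; first by rewrite /congr_IsD invg1 gmul1g.
by apply/mk_eq/eqv_sym; rewrite /congr_IsD invg1 gmul1g.
Qed.

(* The quotient by an isolator has no K-torsion. *)
Lemma Q_tfree (a : K) (q : Q) : a != 0 -> a *: q = 0 -> q = 0.
Proof.
move=> a0; elim/Q_ind: q => x; rewrite scaleQE => /mk_eq0 [b [b0 Dxab]].
by apply/mk_eq0; exists (a * b); rewrite mulf_neq0 // -(pwM hKG).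
Qed.

Lemma Ksubgroup_preimage (L : Q -> Prop) : subm L -> Ksubgroup pw (fun g => L (mk g)).
Proof.
case=> L0 LD LZ; split => // [x y Lx Ly|x Lx|x a Lx].
- by rewrite -addQE; apply: LD.
- by rewrite -oppQE; apply: submN.
- by rewrite -scaleQE; apply: LZ.
Qed.

Definition ZQ (q : Q) : Prop := exists2 z, central z & q = mk z.

Lemma subm_ZQ : subm ZQ.
Proof.
have [Z1 ZM ZV ZP] := Ksubgroup_central hKG.
split.
- by exists 1.
- by move=> _ _ [z Zz ->] [z' Zz' ->]; exists (z ** z'); rewrite ?addQE //; apply: ZM.
- by move=> a _ [z Zz ->]; exists (pw z a); rewrite ?scaleQE //; apply: ZP.
Qed.

Lemma ZQ_pure (a : K) (q : Q) : a != 0 -> ZQ (a *: q) -> ZQ q.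
Proof.
move=> a0; elim/Q_ind: q => x; rewrite scaleQE => -[z Zz /mk_eq Exz].
exists x => //; apply: (central_pw_pure hbin hKG htf a0).
have [_ ZM ZV _] := Ksubgroup_central hKG.
have -> : pw x a = z ** inv (inv (pw x a) ** z).
  by rewrite invMg invgK gmulA mulgV gmul1g.
by apply: ZM => //; apply/ZV/IsD_Z.
Qed.

End IsDQuotient.

Section CentralProducts.
Variables (K : idomainType) (G : grp) (pw : G -> K -> G).
Hypotheses (hbin : is_binomial K) (hKG : is_nil2_Kgroup pw).
Local Infix "**" := (@gmul G) (at level 40, left associativity).
Local Notation "1" := (gone G).
Local Notation inv := (@ginv G).

Fixpoint all_central (zs : seq G) : Prop :=
  if zs is z :: zs' then central z /\ all_central zs' else True.

Fixpoint cprod (zs : seq G) (c : nat -> K) : G :=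
  if zs is z :: zs' then pw z (c 0%N) ** cprod zs' (fun i => c i.+1) else 1.

Lemma cprod_central zs c : all_central zs -> central (cprod zs c).
Proof.
have [Z1 ZM _ ZP] := Ksubgroup_central hKG.
by elim: zs c => [|z zs IH] c //= [Zz Zzs]; apply: ZM; [apply: ZP | apply: IH].
Qed.

Lemma cprodD zs c d : all_central zs ->
  cprod zs c ** cprod zs d = cprod zs (fun i => c i + d i).
Proof.
elim: zs c d => [|z zs IH] c d /=; first by rewrite gmul1g.
move=> [Zz Zzs]; rewrite -(pwD hKG) -(IH _ _ Zzs) -!gmulA; congr (_ ** _).
by rewrite gmulA (cprod_central _ Zzs) -gmulA.
Qed.

Lemma cprod0 zs c : (forall i, (i < size zs)%N -> c i = 0) -> cprod zs c = 1.
Proof.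
elim: zs c => [|z zs IH] c //= c0.
by rewrite c0 // (pw0 hKG) gmul1g IH // => i; apply: (c0 i.+1).
Qed.

Lemma cprodN zs c : all_central zs -> inv (cprod zs c) = cprod zs (fun i => - c i).
Proof.
move=> Zzs; symmetry; apply: inv_uniq.
by rewrite cprodD // cprod0 // => i _; apply: subrr.
Qed.

Lemma cprodZ zs c a : all_central zs ->
  pw (cprod zs c) a = cprod zs (fun i => a * c i).
Proof.
elim: zs c => [|z zs IH] c /= => [_|[Zz Zzs]]; first exact: pw1g.
rewrite (pwMg_commute hbin hKG); last exact/esym/cprod_central.
by rewrite (pwM hKG) IH // mulrC.
Qed.

Lemma Ksubgroup_cprod zs : all_central zs ->
  Ksubgroup pw (fun x => exists c, x = cprod zs c).
Proof.
move=> Zzs; split.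
- by exists (fun _ => 0); rewrite cprod0.
- by move=> _ _ [c ->] [d ->]; exists (fun i => c i + d i); rewrite cprodD.
- by move=> _ [c ->]; exists (fun i => - c i); rewrite cprodN.
- by move=> _ a [c ->]; exists (fun i => a * c i); rewrite cprodZ.
Qed.

End CentralProducts.

Section Splitting.
Variables (K : idomainType) (G : grp) (pw : G -> K -> G).
Variable h : tf_nil2_Kgroup pw.
Let hbin : is_binomial K := let: And3 hb _ _ := h in hb.
Let hKG : is_nil2_Kgroup pw := let: And3 _ hk _ := h in hk.
Local Infix "**" := (@gmul G) (at level 40, left associativity).
Local Notation "1" := (gone G).
Local Notation inv := (@ginv G).
Local Notation Q := (IsD_quotient h).
Local Notation mk := (mk h).

Lemma mk_cprod zs c : mk (cprod pw zs c) = lc c (map mk zs).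
Proof.
elim: zs c => [|z zs IH] c /=; first by rewrite lc_nil.
by rewrite lc_cons -IH scaleQE addQE.
Qed.

Lemma lift_central (p : seq Q) : allin (@ZQ _ _ _ h) p ->
  exists2 zs, all_central zs & map mk zs = p.
Proof.
elim: p => [|q p IH] Zp; first by exists [::].
have [z Zz /= ->] := Zp 0%N isT; have [zs Zzs <-] := IH (fun i => Zp i.+1).
by exists (z :: zs).
Qed.

Lemma Q_fin_gen : Kfin_gen pw -> exists s : seq Q, forall q, span s q.
Proof.
case=> n [f genf]; exists (map (fun i => mk (f i)) (enum 'I_n)); elim/Q_ind => x.
apply: (Kgen_min (Ksubgroup_preimage (subm_span _)) _ (genf x)) => _ [i ->].
exists (fun j : nat => (j == i)%:R).
rewrite lc_delta; last by rewrite size_map size_enum_ord.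
by rewrite (nth_map i) ?size_enum_ord // nth_ord_enum.
Qed.

Lemma gcomm_central x y n n' : central n -> central n' ->
  gcomm (x ** n) (y ** n') = gcomm x y.
Proof.
move=> Zn Zn'; rewrite !gcommE.
have -> : y ** n' ** (x ** n) = y ** x ** (n' ** n).
  by rewrite -!gmulA (gmulA n') Zn' -gmulA.
have -> : x ** n ** (y ** n') = x ** y ** (n' ** n).
  by rewrite -!gmulA (gmulA n) Zn -gmulA Zn.
have [_ ZM ZV _] := Ksubgroup_central hKG; have Zn'n := ZM _ _ Zn' Zn.
by rewrite invMg -(Zn'n (x ** y)) (ZV _ Zn'n) -gmulA mulKg.
Qed.

(* From now on, [zs] lifts a basis of Z(G) Is(G') / Is(G') to Z(G), and [m]
   spans a free complement of it in Q. *)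
Variables (zs : seq G) (m : seq Q).
Hypothesis zs_central : all_central zs.
Hypothesis decomp : forall q, exists c d, q = lc c (map mk zs) + lc d m.
Hypothesis indep_zs_m : forall c d, lc c (map mk zs) + lc d m = 0 ->
  forall i, (i < size zs)%N -> c i = 0.
Hypothesis indep_m : forall d, ZQ (lc d m) -> forall i, (i < size m)%N -> d i = 0.

Definition G0 (x : G) : Prop := exists c, x = cprod pw zs c.
Definition H (g : G) : Prop := span m (mk g).

Lemma G0_central x : G0 x -> central x.
Proof. by case=> c ->; apply: (cprod_central hKG _ zs_central). Qed.

(* As the classes of [zs] are independent from span(m), a central product
   whose class lies in span(m) is trivial. *)
Lemma cprod_trivial c d : lc c (map mk zs) = lc d m -> cprod pw zs c = 1.
Proof.
move=> E; apply: (cprod0 hKG); apply: (indep_zs_m (d := fun i => - d i)).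
by rewrite lcN E subrr.
Qed.

Lemma H_mod_G0 g : exists c, H (g ** inv (cprod pw zs c)).
Proof.
have [c [d E]] := decomp (mk g); exists c, d.
by rewrite -addQE -oppQE E mk_cprod addrAC subrr add0r.
Qed.

Lemma central_mod_G0 z : central z -> exists c, IsD pw (inv (cprod pw zs c) ** z).
Proof.
move=> Zz; have [c [d E]] := decomp (mk z); exists c.
have Zd : ZQ (lc d m).
  rewrite -(addKr (lc c (map mk zs)) (lc d m)) -E addrC.
  apply: (submB (subm_ZQ h)); first by exists z.
  by rewrite -mk_cprod; exists (cprod pw zs c) => //; apply: (cprod_central hKG _ zs_central).
move: E; rewrite (lc0 (indep_m Zd)) addr0 -mk_cprod => /mk_eq.
exact: eqv_sym.
Qed.

Lemma G0_addition : addition pw G0.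
Proof.
have [_ ZM ZV _] := Ksubgroup_central hKG.
split.
- exact: (Ksubgroup_cprod hbin hKG zs_central).
- by move=> x /G0_central Zx; split.
- move=> _ [c ->] [/mk_eq0 Ic _]; apply: (cprod_trivial (d := fun _ => 0)).
  by rewrite -mk_cprod Ic lc0.
- move=> z [_ Zz]; have [c Ic] := central_mod_G0 (fun g => Zz g I).
  exists (cprod pw zs c), (inv (cprod pw zs c) ** z); rewrite mulKVg.
  split => //; first by exists c.
  split => //; split => // g _; apply: ZM => [|g']; last exact: Zz.
  exact/ZV/(cprod_central hKG _ zs_central).
Qed.

(* G is the direct product of H and G0: H is normal since G' <= Is(G') <= H. *)
Lemma H_G0_direct : direct_product H G0.
Proof.
split.
- move=> x y [d Hd]; exists d; rewrite gconjE -addQE Hd.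
  by have /mk_eq0 -> := IsD_comm h x y; rewrite addr0.
- by move=> x y G0x; rewrite gconj_commute //; apply: G0_central.
- move=> x [d Hd] [c xE]; rewrite xE in Hd *.
  by apply: (cprod_trivial (d := d)); rewrite -mk_cprod.
- move=> g; have [c Hc] := H_mod_G0 g.
  by exists (g ** inv (cprod pw zs c)), (cprod pw zs c); rewrite mulgKV; split => //; exists c.
Qed.

(* G' is generated by commutators of elements of H, as G = H G0 with G0
   central. *)
Lemma Kderived_H x : Kderived pw (@fullG G) x -> Kderived pw H x.
Proof.
have [_ _ ZV _] := Ksubgroup_central hKG.
apply: Kgen_min; first exact: Ksubgroup_Kgen.
move=> _ [x' [y' [_ _ ->]]]; apply: Kgen_in.
have [c Hc] := H_mod_G0 x'; have [c' Hc'] := H_mod_G0 y'.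
exists (x' ** inv (cprod pw zs c)), (y' ** inv (cprod pw zs c')); split => //.
by rewrite gcomm_central //; apply/ZV/(cprod_central hKG _ zs_central).
Qed.

(* A central element of H is central in G (as G = H G0 with G0 central), so
   its class lies both in Z(G) Is(G') / Is(G') and in the span of [m], hence
   vanishes: Z(H) <= Is(G') = Is(H'). *)
Lemma Zcenter_H_isolated z : Zcenter H z -> H z /\ Is pw (Kderived pw H) z.
Proof.
move=> [Hz ZHz]; split => //.
have Zz : central z.
  move=> g; have [c Hc] := H_mod_G0 g.
  rewrite -(mulgKV g (cprod pw zs c)) gmulA (ZHz _ Hc) -gmulA.
  by rewrite -(cprod_central hKG c zs_central z) gmulA.
have [d Ed] := Hz.
have /mk_eq0 [a [a0 Dza]] : mk z = 0.
  by rewrite Ed (lc0 (indep_m _)) // -Ed; exists z.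
by exists a; split => //; apply: Kderived_H.
Qed.

Lemma regular_of_splitting : regular pw.
Proof.
exists H, G0; split.
- exact: (Ksubgroup_preimage (subm_span m)).
- exact: G0_addition.
- exact: H_G0_direct.
- exact: Zcenter_H_isolated.
Qed.

End Splitting.

Theorem mainTheorem11 (K : idomainType) (hbin : is_binomial K) (hpid : is_PID K)
  (G : grp) (pw : G -> K -> G) (hKG : is_nil2_Kgroup pw)
  (hfg : Kfin_gen pw) (htf : Ktorsion_free pw) :
  regular pw.
Proof.
have h : tf_nil2_Kgroup pw by split.
have [s gen_s] := Q_fin_gen h hfg.
have [p [m [Zp decomp indep_pm indep_m]]] :=
  pure_complement hpid gen_s (@Q_tfree _ _ _ h) (subm_ZQ h) (@ZQ_pure _ _ _ h).
have [zs Zzs pE] := lift_central Zp.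
rewrite -pE in decomp indep_pm.
apply: (regular_of_splitting Zzs decomp _ indep_m).
by move=> c d /indep_pm; rewrite size_map.
Qed.
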